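(* The map $\zeta\mapsto z(\zeta)=h_E(\zeta)+ih_N(\zeta)-h_W(\zeta)-ih_S(\zeta)$ is an orientation-preserving diffeomorphism from the unit disc $\mathbb D$ onto $\diamondsuit=\{x+iy:|x|+|y|<1\}$.
   Context: $\gamma_E=(e^{-i\pi/4},e^{i\pi/4})$, $\gamma_N=(e^{i\pi/4},e^{3i\pi/4})$, $\gamma_W=(e^{3i\pi/4},e^{5i\pi/4})$, $\gamma_S=(e^{5i\pi/4},e^{7i\pi/4})$ are the four counterclockwise boundary arcs of the unit disc $\mathbb D$, and $h_E,h_N,h_W,h_S$ are their harmonic measures in $\mathbb D$: for $\alpha<\beta<\alpha+2\pi$, $\mathrm{hm}_{\mathbb D}(\zeta;(e^{i\alpha},e^{i\beta}))=\tfrac1\pi\big(\arg(e^{i\beta}-\zeta)-\arg(e^{i\alpha}-\zeta)\big)-\tfrac1{2\pi}(\beta-\alpha)$. *)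

(* classical reals; points of C are represented as R*R. *)
From Stdlib Require Import Reals.
Open Scope R_scope.

Definition pt := (R * R)%type.

Definition cis (t : R) : pt := (cos t, sin t).
Definition psub (u v : pt) : pt := (fst u - fst v, snd u - snd v).
Definition pnorm (u : pt) : R := sqrt (fst u * fst u + snd u * snd u).

(* Argument of a nonzero point, normalised to [0, 2*PI). *)
Definition parg (u : pt) : R :=
  let c := acos (fst u / pnorm u) in
  if Rle_dec 0 (snd u) then c else 2 * PI - c.

Definition ccw_angle (u v : pt) : R :=
  let d := parg v - parg u in
  if Rlt_dec d 0 then d + 2 * PI else d.

(* Harmonic measure in D of the arc (e^{i a}, e^{i b}), a < b < a + 2 PI:
   (1/PI)(arg(e^{ib}-z) - arg(e^{ia}-z)) - (b-a)/(2 PI). *)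
Definition hm (a b : R) (z : pt) : R :=
  / PI * ccw_angle (psub (cis a) z) (psub (cis b) z) - (b - a) / (2 * PI).

Definition hE := hm (- PI / 4) (PI / 4).
Definition hN := hm (PI / 4) (3 * PI / 4).
Definition hW := hm (3 * PI / 4) (5 * PI / 4).
Definition hS := hm (5 * PI / 4) (7 * PI / 4).

Definition zmap (p : pt) : pt := (hE p - hW p, hN p - hS p).

Definition in_disc (p : pt) : Prop := fst p * fst p + snd p * snd p < 1.
Definition in_diamond (p : pt) : Prop := Rabs (fst p) + Rabs (snd p) < 1.

Definition has_pdx (f : pt -> R) (p : pt) (l : R) : Prop :=
  derivable_pt_lim (fun t => f (t, snd p)) (fst p) l.
Definition has_pdy (f : pt -> R) (p : pt) (l : R) : Prop :=
  derivable_pt_lim (fun t => f (fst p, t)) (snd p) l.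

Definition cont_on (U : pt -> Prop) (f : pt -> R) : Prop :=
  forall p, U p -> forall eps, eps > 0 -> exists del, del > 0 /\
    forall q, U q -> pnorm (psub q p) < del -> Rabs (f q - f p) < eps.

Fixpoint Ck (k : nat) (U : pt -> Prop) (f : pt -> R) : Prop :=
  match k with
  | O => cont_on U f
  | S k' => cont_on U f /\ exists gx gy : pt -> R,
      (forall p, U p -> has_pdx f p (gx p) /\ has_pdy f p (gy p)) /\
      Ck k' U gx /\ Ck k' U gy
  end.

Definition smooth_on (U : pt -> Prop) (f : pt -> R) : Prop := forall k, Ck k U f.

Definition smooth_map_on (U : pt -> Prop) (F : pt -> pt) : Prop :=
  smooth_on U (fun p => fst (F p)) /\ smooth_on U (fun p => snd (F p)).

Definition diffeo_onto (U V : pt -> Prop) (F : pt -> pt) : Prop :=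
  (forall p, U p -> V (F p)) /\
  exists G : pt -> pt,
    (forall q, V q -> U (G q)) /\
    (forall p, U p -> G (F p) = p) /\
    (forall q, V q -> F (G q) = q) /\
    smooth_map_on U F /\ smooth_map_on V G.

Definition orientation_preserving_on (U : pt -> Prop) (F : pt -> pt) : Prop :=
  forall p, U p -> exists a b c d : R,
    has_pdx (fun q => fst (F q)) p a /\ has_pdy (fun q => fst (F q)) p b /\
    has_pdx (fun q => snd (F q)) p c /\ has_pdy (fun q => snd (F q)) p d /\
    a * d - b * c > 0.

From Stdlib Require Import Reals Lra Psatz FunctionalExtensionality.
Open Scope R_scope.

(* Write p = a + i b and z(p) = x + i y.  The arcs E and N together form a half circle, and
   the angle under which a point of the disc sees a half circle is [PI + atan t] with t
   explicit; summing the four harmonic measures accordingly gives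
     tan (PI (x + y) / 2) = sqrt 2 (a + b) / (1 - |p|^2),
     tan (PI (x - y) / 2) = sqrt 2 (a - b) / (1 - |p|^2).
   Since [atan] maps onto ]-PI/2, PI/2[, z maps the disc into the diamond, and the two
   equations can be solved for p in closed form, which gives a smooth inverse.  The Jacobian
   of z is [2 X Y / PI^2] times minus the Jacobian of the right-hand sides
   (X, Y > 0 the derivatives of [atan]), and the latter is [-4 (1 + |p|^2) / (1 - |p|^2)^3]. *)

Definition pdot (u v : pt) : R := fst u * fst v + snd u * snd v.
Definition pcross (u v : pt) : R := fst u * snd v - snd u * fst v.

Lemma pdot_self_ge0 (u : pt) : 0 <= pdot u u.
Proof. unfold pdot; nra. Qed.

Lemma pnorm_sqr (u : pt) : pnorm u * pnorm u = pdot u u.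
Proof. apply sqrt_sqrt, pdot_self_ge0. Qed.

Lemma pnorm_pos (u : pt) : 0 < pdot u u -> 0 < pnorm u.
Proof. apply sqrt_lt_R0. Qed.

Lemma Rabs_fst_le_pnorm (u : pt) : Rabs (fst u) <= pnorm u.
Proof. rewrite <- sqrt_Rsqr_abs; apply sqrt_le_1_alt; unfold Rsqr; nra. Qed.

Lemma Rabs_snd_le_pnorm (u : pt) : Rabs (snd u) <= pnorm u.
Proof. rewrite <- sqrt_Rsqr_abs; apply sqrt_le_1_alt; unfold Rsqr; nra. Qed.

(** * Continuous and smooth functions on a planar set *)

Section Continuity.
Variable U : pt -> Prop.

Lemma cont_on_ext (f g : pt -> R) :
  (forall p, U p -> f p = g p) -> cont_on U f -> cont_on U g.
Proof.
  intros Heq Hf p Hp eps Heps.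
  destruct (Hf p Hp eps Heps) as [d [Hd H]]; exists d; split; [exact Hd|].
  intros q Hq Hqp; rewrite <- (Heq p Hp), <- (Heq q Hq); auto.
Qed.

Lemma cont_on_const (c : R) : cont_on U (fun _ => c).
Proof.
  intros p _ eps Heps; exists 1; split; [lra|].
  intros; rewrite Rminus_diag, Rabs_R0; lra.
Qed.

Lemma cont_on_fst : cont_on U (fun p => fst p).
Proof.
  intros p _ eps Heps; exists eps; split; [exact Heps|]; intros q _ Hq.
  pose proof (Rabs_fst_le_pnorm (psub q p)); simpl in *; lra.
Qed.

Lemma cont_on_snd : cont_on U (fun p => snd p).
Proof.
  intros p _ eps Heps; exists eps; split; [exact Heps|]; intros q _ Hq.
  pose proof (Rabs_snd_le_pnorm (psub q p)); simpl in *; lra.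
Qed.

Lemma cont_on_plus (f g : pt -> R) :
  cont_on U f -> cont_on U g -> cont_on U (fun p => f p + g p).
Proof.
  intros Hf Hg p Hp eps Heps.
  destruct (Hf p Hp (eps / 2)) as [d1 [Hd1 H1]]; [lra|].
  destruct (Hg p Hp (eps / 2)) as [d2 [Hd2 H2]]; [lra|].
  exists (Rmin d1 d2); split; [apply Rmin_pos; assumption|].
  intros q Hq Hqp; pose proof (Rmin_l d1 d2); pose proof (Rmin_r d1 d2).
  specialize (H1 q Hq ltac:(lra)); specialize (H2 q Hq ltac:(lra)).
  replace (f q + g q - (f p + g p)) with ((f q - f p) + (g q - g p)) by ring.
  pose proof (Rabs_triang (f q - f p) (g q - g p)); lra.
Qed.

Lemma cont_on_comp (phi : R -> R) (f : pt -> R) :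
  (forall p, U p -> continuity_pt phi (f p)) -> cont_on U f ->
  cont_on U (fun p => phi (f p)).
Proof.
  intros Hphi Hf p Hp eps Heps.
  destruct (Hphi p Hp eps Heps) as [d [Hd Hphi_d]].
  destruct (Hf p Hp d Hd) as [d' [Hd' Hf_d']].
  exists d'; split; [exact Hd'|]; intros q Hq Hqp.
  destruct (Req_dec (f q) (f p)) as [-> | Hne].
  - rewrite Rminus_diag, Rabs_R0; lra.
  - apply (Hphi_d (f q)); split; [split; [exact I | auto] | exact (Hf_d' q Hq Hqp)].
Qed.

(* Polarisation: f g = ((f + g)^2 - (f - g)^2) / 4. *)
Lemma cont_on_mult (f g : pt -> R) :
  cont_on U f -> cont_on U g -> cont_on U (fun p => f p * g p).
Proof.
  intros Hf Hg.
  assert (Hopp : cont_on U (fun p => - g p))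
    by (apply (cont_on_comp (fun y => - y)); [intros; reg | exact Hg]).
  assert (Hsqr : forall h, cont_on U h -> cont_on U (fun p => h p * h p))
    by (intros h Hh; apply (cont_on_comp (fun y => y * y)); [intros; reg | exact Hh]).
  apply (cont_on_ext (fun p => / 4 * ((f p + g p) * (f p + g p) + - ((f p + - g p) * (f p + - g p)))));
    [intros; field|].
  apply (cont_on_comp (fun y => / 4 * y)); [intros; reg|].
  apply cont_on_plus; [apply Hsqr, cont_on_plus; assumption|].
  apply (cont_on_comp (fun y => - y)); [intros; reg|].
  apply Hsqr, cont_on_plus; assumption.
Qed.

End Continuity.

Section PartialDerivatives.
Variables (f g : pt -> R) (p : pt) (l1 l2 : R).

Lemma has_pdx_plus : has_pdx f p l1 -> has_pdx g p l2 ->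
  has_pdx (fun q => f q + g q) p (l1 + l2).
Proof. apply derivable_pt_lim_plus. Qed.
Lemma has_pdy_plus : has_pdy f p l1 -> has_pdy g p l2 ->
  has_pdy (fun q => f q + g q) p (l1 + l2).
Proof. apply derivable_pt_lim_plus. Qed.

Lemma has_pdx_minus : has_pdx f p l1 -> has_pdx g p l2 ->
  has_pdx (fun q => f q - g q) p (l1 - l2).
Proof. apply derivable_pt_lim_minus. Qed.
Lemma has_pdy_minus : has_pdy f p l1 -> has_pdy g p l2 ->
  has_pdy (fun q => f q - g q) p (l1 - l2).
Proof. apply derivable_pt_lim_minus. Qed.

Lemma has_pdx_mult : has_pdx f p l1 -> has_pdx g p l2 ->
  has_pdx (fun q => f q * g q) p (l1 * g p + f p * l2).
Proof. destruct p; apply derivable_pt_lim_mult. Qed.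
Lemma has_pdy_mult : has_pdy f p l1 -> has_pdy g p l2 ->
  has_pdy (fun q => f q * g q) p (l1 * g p + f p * l2).
Proof. destruct p; apply derivable_pt_lim_mult. Qed.

Lemma has_pdx_div : has_pdx f p l1 -> has_pdx g p l2 -> g p <> 0 ->
  has_pdx (fun q => f q / g q) p ((l1 * g p - l2 * f p) / (g p * g p)).
Proof. destruct p; apply derivable_pt_lim_div. Qed.
Lemma has_pdy_div : has_pdy f p l1 -> has_pdy g p l2 -> g p <> 0 ->
  has_pdy (fun q => f q / g q) p ((l1 * g p - l2 * f p) / (g p * g p)).
Proof. destruct p; apply derivable_pt_lim_div. Qed.

Lemma has_pdx_comp (phi : R -> R) : has_pdx f p l1 ->
  derivable_pt_lim phi (f p) l2 -> has_pdx (fun q => phi (f q)) p (l2 * l1).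
Proof. destruct p; apply derivable_pt_lim_comp. Qed.
Lemma has_pdy_comp (phi : R -> R) : has_pdy f p l1 ->
  derivable_pt_lim phi (f p) l2 -> has_pdy (fun q => phi (f q)) p (l2 * l1).
Proof. destruct p; apply derivable_pt_lim_comp. Qed.

End PartialDerivatives.

Lemma has_pdx_const (c : R) (p : pt) : has_pdx (fun _ => c) p 0.
Proof. apply derivable_pt_lim_const. Qed.
Lemma has_pdy_const (c : R) (p : pt) : has_pdy (fun _ => c) p 0.
Proof. apply derivable_pt_lim_const. Qed.
Lemma has_pdx_fst (p : pt) : has_pdx (fun q => fst q) p 1.
Proof. apply derivable_pt_lim_id. Qed.
Lemma has_pdy_fst (p : pt) : has_pdy (fun q => fst q) p 0.
Proof. apply derivable_pt_lim_const. Qed.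
Lemma has_pdx_snd (p : pt) : has_pdx (fun q => snd q) p 0.
Proof. apply derivable_pt_lim_const. Qed.
Lemma has_pdy_snd (p : pt) : has_pdy (fun q => snd q) p 1.
Proof. apply derivable_pt_lim_id. Qed.

Definition open_along_axes (U : pt -> Prop) : Prop :=
  forall p, U p -> exists d, d > 0 /\
    (forall t, Rabs (t - fst p) < d -> U (t, snd p)) /\
    (forall t, Rabs (t - snd p) < d -> U (fst p, t)).

Section LocalPartials.
Variables (U : pt -> Prop) (f g : pt -> R) (p : pt) (l : R).
Hypotheses (HU : open_along_axes U) (Hp : U p) (Heq : forall q, U q -> f q = g q).

Lemma has_pdx_ext_open : has_pdx f p l -> has_pdx g p l.
Proof.
  destruct (HU p Hp) as [d [Hd [Hx _]]]; destruct p as [x y]; simpl in Hx.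
  apply (derivable_pt_lim_locally_ext _ _ x (x - d) (x + d)); [lra|].
  intros t Ht; apply Heq, Hx, Rabs_def1; lra.
Qed.

Lemma has_pdy_ext_open : has_pdy f p l -> has_pdy g p l.
Proof.
  destruct (HU p Hp) as [d [Hd [_ Hy]]]; destruct p as [x y]; simpl in Hy.
  apply (derivable_pt_lim_locally_ext _ _ y (y - d) (y + d)); [lra|].
  intros t Ht; apply Heq, Hy, Rabs_def1; lra.
Qed.

End LocalPartials.

Section Smoothness.
Variable U : pt -> Prop.

Lemma Ck_S_weaken (k : nat) (f : pt -> R) : Ck (S k) U f -> Ck k U f.
Proof.
  revert f; induction k as [|k IHk]; intros f [Hc [gx [gy [Hd [Hx Hy]]]]]; [exact Hc|].
  split; [exact Hc|]; exists gx, gy; auto.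
Qed.

Lemma Ck_ext (k : nat) (f g : pt -> R) : (forall p, f p = g p) -> Ck k U f -> Ck k U g.
Proof. intros H; replace g with f; [auto | apply functional_extensionality; auto]. Qed.

Lemma Ck_const (k : nat) (c : R) : Ck k U (fun _ => c).
Proof.
  revert c; induction k as [|k IHk]; intro c; [apply cont_on_const|].
  split; [apply cont_on_const|]; exists (fun _ => 0), (fun _ => 0).
  split; [intros; split; [apply has_pdx_const | apply has_pdy_const] | auto].
Qed.

Lemma Ck_fst (k : nat) : Ck k U (fun p => fst p).
Proof.
  destruct k; [apply cont_on_fst|].
  split; [apply cont_on_fst|]; exists (fun _ => 1), (fun _ => 0).
  split; [intros; split; [apply has_pdx_fst | apply has_pdy_fst] | split; apply Ck_const].
Qed.

Lemma Ck_snd (k : nat) : Ck k U (fun p => snd p).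
Proof.
  destruct k; [apply cont_on_snd|].
  split; [apply cont_on_snd|]; exists (fun _ => 0), (fun _ => 1).
  split; [intros; split; [apply has_pdx_snd | apply has_pdy_snd] | split; apply Ck_const].
Qed.

Lemma Ck_plus (k : nat) (f g : pt -> R) :
  Ck k U f -> Ck k U g -> Ck k U (fun p => f p + g p).
Proof.
  revert f g; induction k as [|k IHk]; intros f g Hf Hg; [apply cont_on_plus; auto|].
  destruct Hf as [Hfc [fx [fy [Hfd [Hfx Hfy]]]]], Hg as [Hgc [gx [gy [Hgd [Hgx Hgy]]]]].
  split; [apply cont_on_plus; auto|].
  exists (fun p => fx p + gx p), (fun p => fy p + gy p); split; [|auto].
  intros p Hp; destruct (Hfd p Hp), (Hgd p Hp).
  split; [apply has_pdx_plus | apply has_pdy_plus]; auto.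
Qed.

Lemma Ck_mult (k : nat) (f g : pt -> R) :
  Ck k U f -> Ck k U g -> Ck k U (fun p => f p * g p).
Proof.
  revert f g; induction k as [|k IHk]; intros f g Hf Hg; [apply cont_on_mult; auto|].
  pose proof (Ck_S_weaken _ _ Hf) as Hf'; pose proof (Ck_S_weaken _ _ Hg) as Hg'.
  destruct Hf as [Hfc [fx [fy [Hfd [Hfx Hfy]]]]], Hg as [Hgc [gx [gy [Hgd [Hgx Hgy]]]]].
  split; [apply cont_on_mult; auto|].
  exists (fun p => fx p * g p + f p * gx p), (fun p => fy p * g p + f p * gy p).
  split; [|split; apply Ck_plus; auto].
  intros p Hp; destruct (Hfd p Hp), (Hgd p Hp).
  split; [apply has_pdx_mult | apply has_pdy_mult]; auto.
Qed.

Lemma Ck_opp (k : nat) (f : pt -> R) : Ck k U f -> Ck k U (fun p => - f p).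
Proof.
  intros Hf; apply (Ck_ext k (fun p => -1 * f p)); [intros; ring|].
  apply Ck_mult; [apply Ck_const | exact Hf].
Qed.

Lemma Ck_minus (k : nat) (f g : pt -> R) :
  Ck k U f -> Ck k U g -> Ck k U (fun p => f p - g p).
Proof. intros Hf Hg; apply Ck_plus, Ck_opp; assumption. Qed.

Section Composition.
Variables (phi phi' : R -> R) (I : R -> Prop).
Hypothesis phi_deriv : forall y, I y -> derivable_pt_lim phi y (phi' y).

Lemma cont_on_comp_deriv (f : pt -> R) :
  (forall p, U p -> I (f p)) -> cont_on U f -> cont_on U (fun p => phi (f p)).
Proof.
  intros HI; apply cont_on_comp; intros p Hp.
  apply derivable_continuous_pt; exists (phi' (f p)); apply phi_deriv, HI, Hp.
Qed.

Lemma Ck_S_comp (k : nat) (f : pt -> R) :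
  (forall p, U p -> I (f p)) -> Ck (S k) U f -> Ck k U (fun p => phi' (f p)) ->
  Ck (S k) U (fun p => phi (f p)).
Proof.
  intros HI [Hfc [fx [fy [Hfd [Hfx Hfy]]]]] Hf'.
  split; [apply cont_on_comp_deriv; auto|].
  exists (fun p => phi' (f p) * fx p), (fun p => phi' (f p) * fy p).
  split; [|split; apply Ck_mult; auto].
  intros p Hp; destruct (Hfd p Hp).
  split; [apply has_pdx_comp | apply has_pdy_comp]; auto.
Qed.

End Composition.

Lemma Ck_inv (k : nat) (f : pt -> R) :
  (forall p, U p -> f p <> 0) -> Ck k U f -> Ck k U (fun p => / f p).
Proof.
  assert (Hd : forall y, y <> 0 -> derivable_pt_lim Rinv y (- (/ y * / y))).
  { intros y Hy; apply (derivable_pt_lim_ext (fun x => 1 / x)); [intros; unfold Rdiv; ring|].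
    replace (- (/ y * / y)) with ((0 * y - 1 * 1) / y²) by (unfold Rsqr; field; exact Hy).
    apply (derivable_pt_lim_div (fct_cte 1) id); [apply derivable_pt_lim_const | apply derivable_pt_lim_id | exact Hy]. }
  revert f; induction k as [|k IHk]; intros f Hnz Hf.
  - apply (cont_on_comp_deriv _ _ _ Hd); assumption.
  - apply (Ck_S_comp _ _ _ Hd); [assumption | assumption |].
    apply Ck_opp, Ck_mult; apply IHk; auto; apply Ck_S_weaken; exact Hf.
Qed.

Lemma Ck_div (k : nat) (f g : pt -> R) :
  (forall p, U p -> g p <> 0) -> Ck k U f -> Ck k U g -> Ck k U (fun p => f p / g p).
Proof. intros Hnz Hf Hg; apply Ck_mult, Ck_inv; assumption. Qed.

Lemma Ck_atan (k : nat) (f : pt -> R) : Ck k U f -> Ck k U (fun p => atan (f p)).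
Proof.
  assert (Hd : forall y, True -> derivable_pt_lim atan y (/ (1 + y * y)))
    by (intros y _; replace (y * y) with (y ^ 2) by ring; apply derivable_pt_lim_atan).
  intros Hf; destruct k as [|k].
  - apply (cont_on_comp_deriv _ _ _ Hd); auto.
  - apply (Ck_S_comp _ _ _ Hd); auto.
    apply Ck_inv; [intros p _; nra|].
    apply Ck_plus; [apply Ck_const | apply Ck_mult; apply Ck_S_weaken; exact Hf].
Qed.

Lemma Ck_sqrt (k : nat) (f : pt -> R) :
  (forall p, U p -> 0 < f p) -> Ck k U f -> Ck k U (fun p => sqrt (f p)).
Proof.
  pose proof derivable_pt_lim_sqrt as Hd.
  revert f; induction k as [|k IHk]; intros f Hpos Hf.
  - apply (cont_on_comp_deriv _ _ _ Hd); assumption.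
  - apply (Ck_S_comp _ _ _ Hd); [assumption | assumption |].
    apply Ck_inv; [intros p Hp; pose proof (sqrt_lt_R0 _ (Hpos p Hp)); lra|].
    apply Ck_mult; [apply Ck_const | apply IHk; auto; apply Ck_S_weaken; exact Hf].
Qed.

Lemma Ck_tan (k : nat) (f : pt -> R) :
  (forall p, U p -> - (PI / 2) < f p < PI / 2) -> Ck k U f -> Ck k U (fun p => tan (f p)).
Proof.
  assert (Hd : forall y, - (PI / 2) < y < PI / 2 ->
            derivable_pt_lim tan y (1 + tan y * tan y)).
  { intros y Hy; assert (Hc : 0 < cos y) by (apply cos_gt_0; lra).
    replace (1 + tan y * tan y) with ((cos y * cos y - - sin y * sin y) / (cos y)²)
      by (unfold tan, Rsqr; field; lra).
    apply derivable_pt_lim_div; [apply derivable_pt_lim_sin | apply derivable_pt_lim_cos | lra]. }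
  revert f; induction k as [|k IHk]; intros f Hr Hf.
  - apply (cont_on_comp_deriv _ _ _ Hd); assumption.
  - apply (Ck_S_comp _ _ _ Hd); [assumption | assumption |].
    apply Ck_plus; [apply Ck_const|].
    apply Ck_mult; apply IHk; auto; apply Ck_S_weaken; exact Hf.
Qed.

Lemma Ck_ext_open (k : nat) (f g : pt -> R) : open_along_axes U ->
  (forall p, U p -> f p = g p) -> Ck k U f -> Ck k U g.
Proof.
  intros HU Heq; destruct k as [|k]; [apply cont_on_ext; exact Heq|].
  intros [Hfc [fx [fy [Hfd Hk]]]]; split; [apply (cont_on_ext _ f); assumption|].
  exists fx, fy; split; [|exact Hk].
  intros p Hp; destruct (Hfd p Hp).
  split; [apply (has_pdx_ext_open U f) | apply (has_pdy_ext_open U f)]; assumption.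
Qed.

End Smoothness.

Ltac solve_Ck := repeat first
  [ apply Ck_const | apply Ck_fst | apply Ck_snd | apply Ck_atan | apply Ck_sqrt
  | apply Ck_tan | apply Ck_div | apply Ck_minus | apply Ck_plus | apply Ck_mult
  | apply Ck_opp | apply Ck_inv ].

(** * Angles *)

Lemma parg_cos_sin (u : pt) : 0 < pdot u u ->
  0 <= parg u < 2 * PI /\ cos (parg u) = fst u / pnorm u /\ sin (parg u) = snd u / pnorm u.
Proof.
  intros Hu; pose proof (pnorm_pos u Hu) as HN; pose proof (pnorm_sqr u) as HN2.
  unfold pdot in HN2; set (N := pnorm u) in *; set (x := fst u / N).
  assert (Hb : - N <= fst u <= N) by (split; nra).
  assert (Hx : -1 <= x <= 1).
  { unfold x; split; apply (Rmult_le_reg_r N); auto; field_simplify; lra. }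
  assert (Hs : sqrt (1 - x²) = Rabs (snd u / N)).
  { rewrite <- sqrt_Rsqr_abs; f_equal; unfold x, Rsqr; field_simplify_eq; [nra | lra]. }
  pose proof (acos_bound x); pose proof (cos_acos x Hx) as Hc; pose proof (sin_acos x Hx) as Hsn.
  pose proof PI_RGT_0.
  unfold parg; fold N; fold x; destruct (Rle_dec 0 (snd u)) as [Hsnd | Hsnd].
  - split; [lra | split; [exact Hc|]].
    rewrite Hsn, Hs; apply Rabs_pos_eq; unfold Rdiv; apply Rmult_le_pos; [lra | left; apply Rinv_0_lt_compat; lra].
  - assert (Hneg : snd u / N < 0) by (apply Rdiv_neg_pos; lra).
    assert (Hacos : acos x <> 0).
    { intros E; rewrite E, cos_0 in Hc.
      assert (fst u = N) by (rewrite <- (Rmult_1_l N), Hc; unfold x; field; lra).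
      nra. }
    repeat split; try lra.
    + rewrite cos_minus, cos_2PI, sin_2PI, Hc; ring.
    + rewrite sin_minus, cos_2PI, sin_2PI, Hsn, Hs, Rabs_left; [ring | exact Hneg].
Qed.

Lemma ccw_angle_cos_sin (u v : pt) : 0 < pdot u u -> 0 < pdot v v ->
  0 <= ccw_angle u v < 2 * PI /\
  cos (ccw_angle u v) = pdot u v / (pnorm u * pnorm v) /\
  sin (ccw_angle u v) = pcross u v / (pnorm u * pnorm v).
Proof.
  intros Hu Hv.
  destruct (parg_cos_sin u Hu) as [Ru [Cu Su]], (parg_cos_sin v Hv) as [Rv [Cv Sv]].
  pose proof (pnorm_pos u Hu); pose proof (pnorm_pos v Hv).
  assert (Hc : cos (parg v - parg u) = pdot u v / (pnorm u * pnorm v))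
    by (rewrite cos_minus, Cu, Cv, Su, Sv; unfold pdot; field; lra).
  assert (Hs : sin (parg v - parg u) = pcross u v / (pnorm u * pnorm v))
    by (rewrite sin_minus, Cu, Cv, Su, Sv; unfold pcross; field; lra).
  unfold ccw_angle; destruct (Rlt_dec (parg v - parg u) 0).
  - rewrite cos_plus, sin_plus, cos_2PI, sin_2PI, Hc, Hs; repeat split; try lra; ring.
  - repeat split; lra.
Qed.

(* Lagrange's identity. *)
Lemma pnorm_mult (u w : pt) :
  pnorm u * pnorm w = sqrt (pdot u w * pdot u w + pcross u w * pcross u w).
Proof.
  unfold pnorm; rewrite <- sqrt_mult_alt by nra; f_equal.
  unfold pdot, pcross; ring.
Qed.

Lemma ccw_angle_add_cos_sin (u v w : pt) :
  0 < pdot u u -> 0 < pdot v v -> 0 < pdot w w ->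
  cos (ccw_angle u v + ccw_angle v w) = pdot u w / (pnorm u * pnorm w) /\
  sin (ccw_angle u v + ccw_angle v w) = pcross u w / (pnorm u * pnorm w).
Proof.
  intros Hu Hv Hw.
  destruct (ccw_angle_cos_sin u v Hu Hv) as [_ [C1 S1]].
  destruct (ccw_angle_cos_sin v w Hv Hw) as [_ [C2 S2]].
  pose proof (pnorm_pos u Hu); pose proof (pnorm_pos w Hw).
  pose proof (pnorm_pos v Hv); pose proof (pnorm_sqr v) as Nv.
  rewrite cos_plus, sin_plus, C1, C2, S1, S2.
  split.
  - replace (pdot u v / (pnorm u * pnorm v) * (pdot v w / (pnorm v * pnorm w)) -
      pcross u v / (pnorm u * pnorm v) * (pcross v w / (pnorm v * pnorm w)))
      with ((pdot u v * pdot v w - pcross u v * pcross v w) / (pnorm v * pnorm v) / (pnorm u * pnorm w))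
      by (field; lra).
    rewrite Nv; f_equal; unfold pdot, pcross in *; field; lra.
  - replace (pcross u v / (pnorm u * pnorm v) * (pdot v w / (pnorm v * pnorm w)) +
      pdot u v / (pnorm u * pnorm v) * (pcross v w / (pnorm v * pnorm w)))
      with ((pcross u v * pdot v w + pdot u v * pcross v w) / (pnorm v * pnorm v) / (pnorm u * pnorm w))
      by (field; lra).
    rewrite Nv; f_equal; unfold pdot, pcross in *; field; lra.
Qed.

Lemma cos_sin_inj (x y : R) :
  cos x = cos y -> sin x = sin y -> - (2 * PI) < x - y < 2 * PI -> x = y.
Proof.
  intros Hc Hs Hr; pose proof PI_RGT_0.
  set (h := (x - y) / 2).
  assert (Hh : sin h * sin h = 0).
  { assert (Hd : cos (2 * h) = 1).
    { replace (2 * h) with (x - y) by (unfold h; field).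
      rewrite cos_minus, Hc, Hs; pose proof (sin2_cos2 y); unfold Rsqr in *; lra. }
    rewrite cos_2a_sin in Hd; lra. }
  assert (Hh0 : sin h = 0) by nra.
  destruct (Rtotal_order h 0) as [Hl | [He | Hg]].
  - pose proof (sin_lt_0_var h ltac:(unfold h in *; lra) Hl); lra.
  - unfold h in He; lra.
  - pose proof (sin_gt_0 h Hg ltac:(unfold h in *; lra)); lra.
Qed.

Lemma ccw_angle_lt_5PI4 (u v : pt) : 0 < pdot u u -> 0 < pdot v v ->
  pdot u v < pcross u v -> ccw_angle u v < 5 * PI / 4.
Proof.
  intros Hu Hv Hlt.
  destruct (ccw_angle_cos_sin u v Hu Hv) as [Hr [Hc Hs]].
  pose proof (pnorm_pos u Hu); pose proof (pnorm_pos v Hv); pose proof PI_RGT_0.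
  set (t := ccw_angle u v) in *.
  assert (Hcs : cos t < sin t).
  { rewrite Hc, Hs; apply Rmult_lt_compat_r; [apply Rinv_0_lt_compat; nra | exact Hlt]. }
  assert (Hsin : 0 < sin (t - PI / 4)).
  { rewrite sin_minus, cos_PI4, sin_PI4.
    assert (0 < sqrt 2) by (apply sqrt_lt_R0; lra).
    replace (sin t * (1 / sqrt 2) - cos t * (1 / sqrt 2)) with ((sin t - cos t) / sqrt 2)
      by (field; lra).
    apply Rdiv_lt_0_compat; lra. }
  destruct (Rlt_or_le t (5 * PI / 4)) as [Ht | Ht]; [exact Ht|].
  pose proof (sin_le_0 (t - PI / 4) ltac:(lra) ltac:(lra)); lra.
Qed.

Lemma angle_eq_PI_atan (t d c : R) : d < 0 -> 0 <= t < 5 * PI / 2 ->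
  cos t = d / sqrt (d * d + c * c) -> sin t = c / sqrt (d * d + c * c) ->
  t = PI + atan (c / d).
Proof.
  intros Hd Ht Hc Hs; pose proof PI_RGT_0; pose proof (atan_bound (c / d)).
  assert (HS : 0 < sqrt (d * d + c * c)) by (apply sqrt_lt_R0; nra).
  assert (Hsq : sqrt (1 + (c / d)²) = sqrt (d * d + c * c) / - d).
  { rewrite <- (sqrt_Rsqr (sqrt (d * d + c * c) / - d)) by (left; apply Rdiv_lt_0_compat; lra).
    f_equal; unfold Rsqr.
    replace (sqrt (d * d + c * c) / - d * (sqrt (d * d + c * c) / - d))
      with (sqrt (d * d + c * c) * sqrt (d * d + c * c) / (d * d)) by (field; lra).
    rewrite sqrt_sqrt by nra; field; lra. }
  apply cos_sin_inj; [| | lra].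
  - rewrite Hc, (Rplus_comm PI), neg_cos, cos_atan, Hsq; field; lra.
  - rewrite Hs, (Rplus_comm PI), neg_sin, sin_atan, Hsq; field; lra.
Qed.

Lemma pdot_psub_unit_pos (u p : pt) : pdot u u = 1 -> pdot p p < 1 ->
  0 < pdot (psub u p) (psub u p).
Proof.
  destruct u as [c s], p as [a b]; unfold pdot; simpl; intros Hu Hp.
  destruct (Rle_or_lt ((c - a) * (c - a) + (s - b) * (s - b)) 0) as [H | H]; [|exact H].
  assert (Hz : (c - a)² + (s - b)² = 0)
    by (pose proof (Rle_0_sqr (c - a)); pose proof (Rle_0_sqr (s - b)); unfold Rsqr in *; lra).
  destruct (Rplus_sqr_eq_0 _ _ Hz); nra.
Qed.

Lemma quarter_turn_pcross_sub_pdot (c s : R) (p : pt) : c * c + s * s = 1 ->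
  pcross (psub (c, s) p) (psub (- s, c) p) - pdot (psub (c, s) p) (psub (- s, c) p)
  = 1 - pdot p p.
Proof. intros Hu; destruct p; unfold pcross, pdot; simpl; nra. Qed.

Lemma ccw_angle_half_circle (u v w p : pt) :
  pdot u u = 1 -> v = (- snd u, fst u) -> w = (- fst u, - snd u) -> pdot p p < 1 ->
  ccw_angle (psub u p) (psub v p) + ccw_angle (psub v p) (psub w p)
  = PI + atan (2 * pcross u p / (1 - pdot p p)).
Proof.
  intros Hu -> -> Hp; destruct u as [c s]; simpl.
  assert (Hv : pdot (- s, c) (- s, c) = 1) by (unfold pdot in *; simpl in *; lra).
  assert (Hw : pdot (- c, - s) (- c, - s) = 1) by (unfold pdot in *; simpl in *; lra).
  pose proof (pdot_psub_unit_pos _ _ Hu Hp) as Pu.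
  pose proof (pdot_psub_unit_pos _ _ Hv Hp) as Pv.
  pose proof (pdot_psub_unit_pos _ _ Hw Hp) as Pw.
  assert (T1 : ccw_angle (psub (c, s) p) (psub (- s, c) p) < 5 * PI / 4).
  { apply ccw_angle_lt_5PI4; auto.
    pose proof (quarter_turn_pcross_sub_pdot c s p Hu); lra. }
  assert (T2 : ccw_angle (psub (- s, c) p) (psub (- c, - s) p) < 5 * PI / 4).
  { apply ccw_angle_lt_5PI4; auto.
    pose proof (quarter_turn_pcross_sub_pdot (- s) c p Hv); lra. }
  destruct (ccw_angle_cos_sin _ _ Pu Pv) as [R1 _], (ccw_angle_cos_sin _ _ Pv Pw) as [R2 _].
  destruct (ccw_angle_add_cos_sin _ _ _ Pu Pv Pw) as [Hc Hs].
  rewrite pnorm_mult in Hc, Hs.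
  assert (Hdot : pdot (psub (c, s) p) (psub (- c, - s) p) = - (1 - pdot p p))
    by (destruct p; unfold pdot in *; simpl in *; lra).
  assert (Hcross : pcross (psub (c, s) p) (psub (- c, - s) p) = - (2 * pcross (c, s) p))
    by (destruct p; unfold pcross; simpl; ring).
  rewrite Hdot, Hcross in *.
  replace (2 * pcross (c, s) p / (1 - pdot p p))
    with (- (2 * pcross (c, s) p) / - (1 - pdot p p)) by (field; lra).
  apply angle_eq_PI_atan; [lra | lra | exact Hc | exact Hs].
Qed.

(** * The explicit formula and its inverse *)

Definition rsqrt2 : R := 1 / sqrt 2.

Lemma rsqrt2_sqr : rsqrt2 * rsqrt2 = 1 / 2.
Proof.
  unfold rsqrt2; assert (0 < sqrt 2) by (apply sqrt_lt_R0; lra).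
  replace (1 / sqrt 2 * (1 / sqrt 2)) with (1 / (sqrt 2 * sqrt 2)) by (field; lra).
  rewrite sqrt_sqrt; lra.
Qed.

Lemma cis_mPI4 : cis (- PI / 4) = (rsqrt2, - rsqrt2).
Proof.
  unfold cis, rsqrt2; replace (- PI / 4) with (- (PI / 4)) by field.
  rewrite cos_neg, sin_neg, cos_PI4, sin_PI4; reflexivity.
Qed.

Lemma cis_PI4 : cis (PI / 4) = (rsqrt2, rsqrt2).
Proof. unfold cis, rsqrt2; rewrite cos_PI4, sin_PI4; reflexivity. Qed.

Lemma cis_3PI4 : cis (3 * PI / 4) = (- rsqrt2, rsqrt2).
Proof.
  unfold cis, rsqrt2; replace (3 * PI / 4) with (- (PI / 4) + PI) by field.
  rewrite neg_cos, neg_sin, cos_neg, sin_neg, cos_PI4, sin_PI4; f_equal; ring.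
Qed.

Lemma cis_5PI4 : cis (5 * PI / 4) = (- rsqrt2, - rsqrt2).
Proof.
  unfold cis, rsqrt2; replace (5 * PI / 4) with (PI / 4 + PI) by field.
  rewrite neg_cos, neg_sin, cos_PI4, sin_PI4; reflexivity.
Qed.

Lemma cis_7PI4 : cis (7 * PI / 4) = (rsqrt2, - rsqrt2).
Proof.
  unfold cis, rsqrt2; replace (7 * PI / 4) with (- (PI / 4) + PI + PI) by field.
  rewrite !neg_cos, !neg_sin, cos_neg, sin_neg, cos_PI4, sin_PI4; f_equal; ring.
Qed.

(* [Tp] and [Tm] are [tan (PI (x + y) / 2)] and [tan (PI (x - y) / 2)] for [x + i y = z(p)]. *)
Definition Tp (p : pt) : R := 2 * rsqrt2 * (fst p + snd p) / (1 - pdot p p).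
Definition Tm (p : pt) : R := 2 * rsqrt2 * (fst p - snd p) / (1 - pdot p p).

Definition zform (p : pt) : pt :=
  ((atan (Tp p) + atan (Tm p)) / PI, (atan (Tp p) - atan (Tm p)) / PI).

Lemma zmap_eq_zform (p : pt) : in_disc p -> zmap p = zform p.
Proof.
  intros Hp; pose proof PI_RGT_0; set (r := rsqrt2).
  assert (Hhalf : forall c s : R, (c = r \/ c = - r) -> (s = r \/ s = - r) ->
    ccw_angle (psub (c, s) p) (psub (- s, c) p) + ccw_angle (psub (- s, c) p) (psub (- c, - s) p)
    = PI + atan (2 * (c * snd p - s * fst p) / (1 - pdot p p))).
  { intros c s Hc Hs; rewrite ccw_angle_half_circle; try reflexivity; [|exact Hp].
    pose proof rsqrt2_sqr; unfold pdot; simpl.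
    destruct Hc as [-> | ->], Hs as [-> | ->]; unfold r; lra. }
  unfold zmap, hE, hN, hW, hS, hm; fold r.
  rewrite cis_mPI4, cis_PI4, cis_3PI4, cis_5PI4, cis_7PI4; fold r.
  pose proof (Hhalf r (- r) (or_introl eq_refl) (or_intror eq_refl)) as HEN.
  pose proof (Hhalf (- r) r (or_intror eq_refl) (or_introl eq_refl)) as HWS.
  pose proof (Hhalf (- r) (- r) (or_intror eq_refl) (or_intror eq_refl)) as HSE.
  pose proof (Hhalf r r (or_introl eq_refl) (or_introl eq_refl)) as HNW.
  rewrite !Ropp_involutive in HEN; rewrite !Ropp_involutive in HWS; rewrite !Ropp_involutive in HSE.
  replace (2 * (r * snd p - - r * fst p) / (1 - pdot p p)) with (Tp p) in HEN
    by (unfold Tp, r, Rdiv; ring).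
  replace (2 * (- r * snd p - r * fst p) / (1 - pdot p p)) with (- Tp p) in HWS
    by (unfold Tp, r, Rdiv; ring).
  replace (2 * (- r * snd p - - r * fst p) / (1 - pdot p p)) with (Tm p) in HSE
    by (unfold Tm, r, Rdiv; ring).
  replace (2 * (r * snd p - r * fst p) / (1 - pdot p p)) with (- Tm p) in HNW
    by (unfold Tm, r, Rdiv; ring).
  rewrite atan_opp in HWS, HNW.
  set (tE := ccw_angle (psub (r, - r) p) (psub (r, r) p)) in *.
  set (tN := ccw_angle (psub (r, r) p) (psub (- r, r) p)) in *.
  set (tW := ccw_angle (psub (- r, r) p) (psub (- r, - r) p)) in *.
  set (tS := ccw_angle (psub (- r, - r) p) (psub (r, - r) p)) in *.
  unfold zform; f_equal.
  - replace (atan (Tp p) + atan (Tm p)) with (tE - tW) by lra; field; lra.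
  - replace (atan (Tp p) - atan (Tm p)) with (tN - tS) by lra; field; lra.
Qed.

Lemma in_diamond_iff (q : pt) :
  in_diamond q <-> Rabs (fst q + snd q) < 1 /\ Rabs (fst q - snd q) < 1.
Proof.
  unfold in_diamond; destruct q as [x y]; simpl.
  unfold Rabs; repeat destruct Rcase_abs; split; intros; try split; lra.
Qed.

Lemma Rabs_2atan_div_PI_lt_1 (x : R) : Rabs (2 * atan x / PI) < 1.
Proof.
  pose proof (atan_bound x); pose proof PI_RGT_0.
  apply Rabs_def1; apply (Rmult_lt_reg_r PI); try lra;
    unfold Rdiv; rewrite Rmult_assoc, Rinv_l; lra.
Qed.

Lemma zform_in_diamond (p : pt) : in_diamond (zform p).
Proof.
  apply in_diamond_iff; unfold zform; simpl; pose proof PI_RGT_0; split.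
  - replace ((atan (Tp p) + atan (Tm p)) / PI + (atan (Tp p) - atan (Tm p)) / PI)
      with (2 * atan (Tp p) / PI) by (field; lra).
    apply Rabs_2atan_div_PI_lt_1.
  - replace ((atan (Tp p) + atan (Tm p)) / PI - (atan (Tp p) - atan (Tm p)) / PI)
      with (2 * atan (Tm p) / PI) by (field; lra).
    apply Rabs_2atan_div_PI_lt_1.
Qed.

Definition Gp (q : pt) : R := tan (PI * (fst q + snd q) / 2).
Definition Gm (q : pt) : R := tan (PI * (fst q - snd q) / 2).
Definition Groot (q : pt) : R := sqrt (1 + Gp q * Gp q + Gm q * Gm q).

(* Solving [Tp p = Gp q], [Tm p = Gm q] for p: the quadratic equation for
   [1 - |p|^2] has the positive root [2 / (1 + Groot q)]. *)
Definition zinv (q : pt) : pt :=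
  (rsqrt2 * (Gp q + Gm q) / (1 + Groot q), rsqrt2 * (Gp q - Gm q) / (1 + Groot q)).

Lemma Groot_ge_1 (q : pt) : 1 <= Groot q.
Proof.
  unfold Groot; rewrite <- sqrt_1 at 1; apply sqrt_le_1_alt; nra.
Qed.

Lemma Groot_sqr (q : pt) : Groot q * Groot q = 1 + Gp q * Gp q + Gm q * Gm q.
Proof. apply sqrt_sqrt; nra. Qed.

Lemma one_minus_pdot_zinv (q : pt) : 1 - pdot (zinv q) (zinv q) = 2 / (1 + Groot q).
Proof.
  pose proof (Groot_ge_1 q); pose proof (Groot_sqr q); pose proof rsqrt2_sqr.
  unfold pdot, zinv; simpl.
  set (S := Groot q) in *; set (m := Gp q) in *; set (n := Gm q) in *.
  apply (Rmult_eq_reg_r ((1 + S) * (1 + S))); [|nra].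
  field_simplify; [nra | lra ..].
Qed.

Lemma zinv_in_disc (q : pt) : in_disc (zinv q).
Proof.
  pose proof (one_minus_pdot_zinv q) as E; pose proof (Groot_ge_1 q).
  assert (0 < 2 / (1 + Groot q)) by (apply Rdiv_lt_0_compat; lra).
  unfold in_disc, pdot in *; lra.
Qed.

Lemma Tp_zinv (q : pt) : Tp (zinv q) = Gp q.
Proof.
  pose proof (Groot_ge_1 q); pose proof rsqrt2_sqr.
  unfold Tp; rewrite one_minus_pdot_zinv; unfold zinv; simpl.
  set (S := Groot q) in *; set (m := Gp q) in *; set (n := Gm q) in *.
  field_simplify; [|lra].
  replace (rsqrt2 ^ 2) with (rsqrt2 * rsqrt2) by ring; rewrite rsqrt2_sqr; field.
Qed.

Lemma Tm_zinv (q : pt) : Tm (zinv q) = Gm q.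
Proof.
  pose proof (Groot_ge_1 q); pose proof rsqrt2_sqr.
  unfold Tm; rewrite one_minus_pdot_zinv; unfold zinv; simpl.
  set (S := Groot q) in *; set (m := Gp q) in *; set (n := Gm q) in *.
  field_simplify; [|lra].
  replace (rsqrt2 ^ 2) with (rsqrt2 * rsqrt2) by ring; rewrite rsqrt2_sqr; field.
Qed.

Lemma Gp_zform (p : pt) : Gp (zform p) = Tp p.
Proof.
  pose proof PI_RGT_0; unfold Gp, zform; simpl.
  replace (PI * ((atan (Tp p) + atan (Tm p)) / PI + (atan (Tp p) - atan (Tm p)) / PI) / 2)
    with (atan (Tp p)) by (field; lra).
  apply tan_atan.
Qed.

Lemma Gm_zform (p : pt) : Gm (zform p) = Tm p.
Proof.
  pose proof PI_RGT_0; unfold Gm, zform; simpl.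
  replace (PI * ((atan (Tp p) + atan (Tm p)) / PI - (atan (Tp p) - atan (Tm p)) / PI) / 2)
    with (atan (Tm p)) by (field; lra).
  apply tan_atan.
Qed.

Lemma Groot_zform (p : pt) : in_disc p ->
  Groot (zform p) = (1 + pdot p p) / (1 - pdot p p).
Proof.
  intros Hp; pose proof (pdot_self_ge0 p); pose proof rsqrt2_sqr.
  unfold Groot; rewrite Gp_zform, Gm_zform.
  assert (HD : 0 < 1 - pdot p p) by (unfold in_disc, pdot in *; lra).
  rewrite <- (sqrt_Rsqr ((1 + pdot p p) / (1 - pdot p p)))
    by (left; apply Rdiv_lt_0_compat; lra).
  f_equal; unfold Tp, Tm, Rsqr, pdot in *; destruct p as [a b]; simpl in *.
  field_simplify; [|lra ..].
  replace (rsqrt2 ^ 2) with (1 / 2) by (rewrite <- rsqrt2_sqr; ring).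
  unfold Rdiv; f_equal; field.
Qed.

Lemma zinv_zform (p : pt) : in_disc p -> zinv (zform p) = p.
Proof.
  intros Hp; pose proof (pdot_self_ge0 p); pose proof rsqrt2_sqr.
  assert (HD : 0 < 1 - pdot p p) by (unfold in_disc, pdot in *; lra).
  unfold zinv; rewrite Gp_zform, Gm_zform, Groot_zform by exact Hp.
  unfold Tp, Tm, pdot in *; destruct p as [a b]; simpl in *.
  f_equal; field_simplify; try lra;
    replace (rsqrt2 ^ 2) with (1 / 2) by (rewrite <- rsqrt2_sqr; ring); field; lra.
Qed.

Lemma zform_zinv (q : pt) : in_diamond q -> zform (zinv q) = q.
Proof.
  intros Hq; apply in_diamond_iff in Hq as [Hp Hm]; pose proof PI_RGT_0.
  apply Rabs_def2 in Hp; apply Rabs_def2 in Hm.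
  unfold zform; rewrite Tp_zinv, Tm_zinv; unfold Gp, Gm.
  rewrite !atan_tan by (split; nra).
  destruct q as [x y]; simpl; f_equal; field; lra.
Qed.


(** * Smoothness and orientation *)

Lemma in_disc_perturb (a b t : R) :
  a * a + b * b < 1 -> Rabs (t - a) < (1 - a * a - b * b) / 4 -> t * t + b * b < 1.
Proof.
  intros Hp Ht; apply Rabs_def2 in Ht as [Ht1 Ht2].
  replace t with (a + (t - a)) by ring.
  assert (-1 <= a <= 1) by nra; nra.
Qed.

Lemma in_disc_open_along_axes : open_along_axes in_disc.
Proof.
  intros [a b] Hp; unfold in_disc in *; simpl in *.
  exists ((1 - a * a - b * b) / 4); split; [lra|]; split; intros t Ht; simpl.
  - apply (in_disc_perturb a b t Hp Ht).
  - rewrite Rplus_comm; apply (in_disc_perturb b a t); [lra|].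
    replace (1 - b * b - a * a) with (1 - a * a - b * b) by ring; exact Ht.
Qed.

Lemma zmap_smooth : smooth_map_on in_disc zmap.
Proof.
  pose proof PI_RGT_0.
  assert (Hext : forall (c : pt -> R) k, Ck k in_disc (fun p => c (zform p)) ->
                 Ck k in_disc (fun p => c (zmap p))).
  { intros c k; apply Ck_ext_open; [exact in_disc_open_along_axes|].
    intros p Hp; rewrite zmap_eq_zform by exact Hp; reflexivity. }
  split; intro k; [apply (Hext fst) | apply (Hext snd)]; unfold zform, Tp, Tm, pdot; simpl; solve_Ck;
    intros p Hp; unfold in_disc in Hp; lra.
Qed.

Lemma zinv_smooth : smooth_map_on in_diamond zinv.
Proof.
  pose proof PI_RGT_0.
  assert (Hrange : forall s : R, Rabs s < 1 -> - (PI / 2) < PI * s / 2 < PI / 2)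
    by (intros s Hs; apply Rabs_def2 in Hs; split; nra).
  split; intro k; unfold zinv, Groot, Gp, Gm; simpl; solve_Ck; intros q Hq;
    try (apply in_diamond_iff in Hq as [Hp Hm]; apply Hrange; assumption).
  all: first [ pose proof (Groot_ge_1 q); unfold Groot, Gp, Gm in *; lra | nra ].
Qed.

Ltac solve_pdx := repeat first
  [ apply has_pdx_const | apply has_pdx_fst | apply has_pdx_snd | eapply has_pdx_div
  | eapply has_pdx_minus | eapply has_pdx_plus | eapply has_pdx_mult ].
Ltac solve_pdy := repeat first
  [ apply has_pdy_const | apply has_pdy_fst | apply has_pdy_snd | eapply has_pdy_div
  | eapply has_pdy_minus | eapply has_pdy_plus | eapply has_pdy_mult ].

(* Reduces [has_pd? f p l] to [has_pd? f p ?l'] and [?l' = l]. *)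
Ltac pd_up_to_eq := match goal with |- ?P ?l => eapply (eq_ind _ P) end.

Section TpTmPartials.
Variables a b : R.
Hypothesis Hab : a * a + b * b < 1.
Let D : R := 1 - (a * a + b * b).

Lemma Tp_partials :
  has_pdx Tp (a, b) (2 * rsqrt2 * (D + 2 * a * (a + b)) / (D * D)) /\
  has_pdy Tp (a, b) (2 * rsqrt2 * (D + 2 * b * (a + b)) / (D * D)).
Proof.
  unfold Tp, pdot, D; split; pd_up_to_eq; [solve_pdx | | solve_pdy |]; simpl;
    try lra; field; lra.
Qed.

Lemma Tm_partials :
  has_pdx Tm (a, b) (2 * rsqrt2 * (D + 2 * a * (a - b)) / (D * D)) /\
  has_pdy Tm (a, b) (2 * rsqrt2 * (- D + 2 * b * (a - b)) / (D * D)).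
Proof.
  unfold Tm, pdot, D; split; pd_up_to_eq; [solve_pdx | | solve_pdy |]; simpl;
    try lra; field; lra.
Qed.

Lemma Tp_Tm_jacobian :
  2 * rsqrt2 * (D + 2 * a * (a + b)) / (D * D) * (2 * rsqrt2 * (- D + 2 * b * (a - b)) / (D * D))
  - 2 * rsqrt2 * (D + 2 * b * (a + b)) / (D * D) * (2 * rsqrt2 * (D + 2 * a * (a - b)) / (D * D))
  = - 4 * (1 + a * a + b * b) / (D * D * D).
Proof.
  replace (2 * rsqrt2 * (D + 2 * a * (a + b)) / (D * D) * (2 * rsqrt2 * (- D + 2 * b * (a - b)) / (D * D))
    - 2 * rsqrt2 * (D + 2 * b * (a + b)) / (D * D) * (2 * rsqrt2 * (D + 2 * a * (a - b)) / (D * D)))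
    with (4 * (rsqrt2 * rsqrt2) * ((D + 2 * a * (a + b)) * (- D + 2 * b * (a - b))
          - (D + 2 * b * (a + b)) * (D + 2 * a * (a - b))) / (D * D * D * D))
    by (unfold D; field; lra).
  rewrite rsqrt2_sqr; unfold D; field; lra.
Qed.

End TpTmPartials.

Lemma atan_sum_diff_jacobian_pos (A B : pt -> R) (p : pt) (Ax Ay Bx By : R) :
  has_pdx A p Ax -> has_pdy A p Ay -> has_pdx B p Bx -> has_pdy B p By ->
  Ax * By - Ay * Bx < 0 ->
  exists a b c d : R,
    has_pdx (fun q => (atan (A q) + atan (B q)) / PI) p a /\
    has_pdy (fun q => (atan (A q) + atan (B q)) / PI) p b /\
    has_pdx (fun q => (atan (A q) - atan (B q)) / PI) p c /\
    has_pdy (fun q => (atan (A q) - atan (B q)) / PI) p d /\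
    a * d - b * c > 0.
Proof.
  intros HAx HAy HBx HBy Hjac; pose proof PI_RGT_0.
  set (X := / (1 + A p ^ 2)); set (Y := / (1 + B p ^ 2)).
  assert (HX : 0 < X) by (apply Rinv_0_lt_compat; nra).
  assert (HY : 0 < Y) by (apply Rinv_0_lt_compat; nra).
  exists ((X * Ax + Y * Bx) / PI), ((X * Ay + Y * By) / PI),
         ((X * Ax - Y * Bx) / PI), ((X * Ay - Y * By) / PI).
  assert (Hdivx : forall f l, has_pdx f p l -> has_pdx (fun q => f q / PI) p (l / PI)).
  { intros f l Hf; pd_up_to_eq; [apply (has_pdx_div f (fun _ => PI) p l 0); [exact Hf | apply has_pdx_const | lra]|].
    field; lra. }
  assert (Hdivy : forall f l, has_pdy f p l -> has_pdy (fun q => f q / PI) p (l / PI)).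
  { intros f l Hf; pd_up_to_eq; [apply (has_pdy_div f (fun _ => PI) p l 0); [exact Hf | apply has_pdy_const | lra]|].
    field; lra. }
  pose proof (has_pdx_comp _ _ _ _ atan HAx (derivable_pt_lim_atan _)).
  pose proof (has_pdy_comp _ _ _ _ atan HAy (derivable_pt_lim_atan _)).
  pose proof (has_pdx_comp _ _ _ _ atan HBx (derivable_pt_lim_atan _)).
  pose proof (has_pdy_comp _ _ _ _ atan HBy (derivable_pt_lim_atan _)).
  repeat split;
    [ apply Hdivx, has_pdx_plus | apply Hdivy, has_pdy_plus
    | apply Hdivx, has_pdx_minus | apply Hdivy, has_pdy_minus | ]; try assumption.
  replace ((X * Ax + Y * Bx) / PI * ((X * Ay - Y * By) / PI)
           - (X * Ay + Y * By) / PI * ((X * Ax - Y * Bx) / PI))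
    with (2 * X * Y * - (Ax * By - Ay * Bx) / (PI * PI)) by (field; lra).
  apply Rdiv_lt_0_compat; [|nra].
  apply Rmult_lt_0_compat; [nra | lra].
Qed.

Lemma zmap_orientation_preserving : orientation_preserving_on in_disc zmap.
Proof.
  intros [a b] Hp; pose proof Hp as Hab; unfold in_disc in Hab; simpl in Hab.
  destruct (Tp_partials a b Hab) as [HTpx HTpy], (Tm_partials a b Hab) as [HTmx HTmy].
  destruct (atan_sum_diff_jacobian_pos Tp Tm (a, b) _ _ _ _ HTpx HTpy HTmx HTmy)
    as (j11 & j12 & j21 & j22 & H11 & H12 & H21 & H22 & Hdet).
  { rewrite (Tp_Tm_jacobian a b Hab); apply Rdiv_neg_pos; [nra|].
    apply Rmult_lt_0_compat; [apply Rmult_lt_0_compat|]; lra. }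
  assert (Heq : forall (c : pt -> R) q, in_disc q -> c (zform q) = c (zmap q))
    by (intros c q Hq; rewrite zmap_eq_zform by exact Hq; reflexivity).
  pose proof in_disc_open_along_axes as HU.
  exists j11, j12, j21, j22; repeat split; [| | | | exact Hdet].
  - apply (has_pdx_ext_open in_disc (fun q => fst (zform q))); auto.
  - apply (has_pdy_ext_open in_disc (fun q => fst (zform q))); auto.
  - apply (has_pdx_ext_open in_disc (fun q => snd (zform q))); auto.
  - apply (has_pdy_ext_open in_disc (fun q => snd (zform q))); auto.
Qed.

Theorem mainTheorem9 :
  diffeo_onto in_disc in_diamond zmap /\
  orientation_preserving_on in_disc zmap.
Proof.
  split; [|exact zmap_orientation_preserving].
  split; [intros p Hp; rewrite zmap_eq_zform by exact Hp; apply zform_in_diamond|].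
  exists zinv; split; [intros q _; apply zinv_in_disc|].
  split; [intros p Hp; rewrite zmap_eq_zform by exact Hp; apply zinv_zform, Hp|].
  split; [intros q Hq; rewrite zmap_eq_zform by apply zinv_in_disc; apply zform_zinv, Hq|].
  split; [exact zmap_smooth | exact zinv_smooth].
Qed.
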